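(* Let $(D,\chi)$ be a shaped oriented link diagram, and let $\mathfrak f,\mathfrak f'$ be two flattenings of $(D,\chi)$ (in the sense of the context). For each component $j$ of $D$ let $(\mu_j,\lambda_j)=(\mathfrak s(\mathfrak m_j),\mathfrak s(\mathfrak l_j))$ and $(\mu_j',\lambda_j')=(\mathfrak s'(\mathfrak m_j),\mathfrak s'(\mathfrak l_j))$ be the induced log-decoration values of $\mathfrak f$ and $\mathfrak f'$, and put $\Delta\mu_j=\mu_j'-\mu_j$, $\Delta\lambda_j=\lambda_j'-\lambda_j$ (these are integers). Then \[ \mathcal V(D,\chi,\mathfrak f')-\mathcal V(D,\chi,\mathfrak f)\equiv 4\pi^2 i\sum_j\big(\Delta\lambda_j\,\mu_j-\Delta\mu_j\,\lambda_j\big)\pmod{2\pi^2 i\mathbb Z}, \] the sum running over the components of $D$. In particular $\mathcal V(D,\chi,\mathfrak f)$ depends on the flattening $\mathfrak f$ only through its induced log-decoration values $(\mu_j,\lambda_j)_j$.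
   Context: Oriented link diagram $D$ in the plane; segments are the edges of its underlying $4$-valent planar graph, regions are the components of the complement of that graph. At each crossing $c$, rotate so both strands point right; label incoming upper-left segment $1$, incoming lower-left segment $2$, outgoing lower-right segment $1'$ (continuation of $1$), outgoing upper-right segment $2'$ (continuation of $2$); regions $N$ (top, between $1$ and $2'$), $S$ (bottom, between $2$ and $1'$), $W$ (left, between $1$ and $2$), $E$ (right, between $2'$ and $1'$); $\epsilon=\pm1$ is the sign of the crossing. Shaping: assign $\chi_i=(a_i,b_i,m_i)\in(\mathbb C^\times)^3$ to each segment so that $m$ is constant along each component and at each crossing: if positive, with $A=1-\frac{m_1b_1}{b_2}(1-\frac{a_1}{m_1})(1-\frac{1}{m_2a_2})$, $a_{1'}=a_1/A$, $a_{2'}=a_2A$, $b_{1'}=\frac{m_2b_2}{m_1}(1-m_2a_2(1-\frac{b_2}{m_1b_1}))^{-1}$, $b_{2'}=b_1(1-\frac{m_1}{a_1}(1-\frac{b_2}{m_1b_1}))$; if negative, with $\tilde A=1-\frac{b_2}{m_1b_1}(1-m_1a_1)(1-\frac{m_2}{a_2})$, $a_{1'}=a_1/\tilde A$, $a_{2'}=a_2\tilde A$, $b_{1'}=\frac{m_2b_2}{m_1}(1-\frac{a_2}{m_2}(1-\frac{m_1b_1}{b_2}))$, $b_{2'}=b_1(1-\frac{1}{m_1a_1}(1-\frac{m_1b_1}{b_2}))^{-1}$; all values finite and nonzero. A crossing is pinched if $b_{2'}=b_1$ (equivalently $b_2=m_1b_1$, $m_2b_2=m_1b_{1'}$, $m_2b_{2'}=b_{1'}$).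 Flattening $\mathfrak f$: numbers $\mu_j$ per component with $e^{2\pi i\mu_j}=m_j$; $\beta_k$ per segment with $e^{2\pi i\beta_k}=b_k$; $\gamma_R$ per region with $e^{2\pi i(\gamma_{R'}-\gamma_{R})}=a_k$ whenever regions $R'$ and $R$ lie respectively to the right and left of segment $k$ (relative to its orientation); and at each non-pinched crossing a number $\kappa$ with $e^{2\pi i\kappa}=K:=e^{2\pi i\gamma_N}/(1-(b_{2'}/b_1)^\epsilon)$. Lifted dilogarithm: for $(\zeta^0,\zeta^1)\in\mathbb C^2$ with $w=e^{\zeta^0}\neq1$ and $e^{\zeta^1}(1-w)=1$, set $p^0=(\zeta^0-\operatorname{Log}w)/2\pi i$, $p^1=(\zeta^1+\operatorname{Log}(1-w))/2\pi i\in\mathbb Z$ (principal Log, argument in $(-\pi,\pi]$) and $\mathcal L(\zeta^0,\zeta^1)=R(w)-\frac{\pi^2}{6}+\pi i\,(p^0\operatorname{Log}(1-w)+p^1\operatorname{Log}w)\in\mathbb C/2\pi^2\mathbb Z$, where $R(w)=\operatorname{Li}_2(w)+\frac12\operatorname{Log}w\operatorname{Log}(1-w)$, $\operatorname{Li}_2(w)=-\int_0^w\frac{\log(1-t)}{t}dt$; $\mathcal L$ is understood as the continuous extension of this expression. Crossing volume: at a non-pinched crossing set $\zeta_N^0=2\pi i\epsilon(\beta_{2'}-\beta_1)$, $\zeta_N^1=2\pi i(\kappa-\gamma_N)$; $\zeta_W^0=2\pi i\epsilon(\beta_2-\beta_1-\mu_1)$, $\zeta_W^1=2\pi i(\kappa-\gamma_W+\epsilon\mu_1)$;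 $\zeta_S^0=2\pi i\epsilon(\beta_2-\beta_{1'}+\mu_2-\mu_1)$, $\zeta_S^1=2\pi i(\kappa-\gamma_S+\epsilon(\mu_1-\mu_2))$; $\zeta_E^0=2\pi i\epsilon(\beta_{2'}-\beta_{1'}+\mu_2)$, $\zeta_E^1=2\pi i(\kappa-\gamma_E-\epsilon\mu_2)$ (here $\mu_1,\mu_2$ are the parameters of the components containing strands $1,2$); these satisfy the conditions for $\mathcal L$, and $\mathcal V(c,\mathfrak f)=-i\epsilon[\mathcal L(\zeta_N^0,\zeta_N^1)-\mathcal L(\zeta_W^0,\zeta_W^1)+\mathcal L(\zeta_S^0,\zeta_S^1)-\mathcal L(\zeta_E^0,\zeta_E^1)]$. At a pinched crossing $\mathcal V(c,\mathfrak f)=2\pi^2 i[\beta_1(\gamma_W-\gamma_N)-\beta_{1'}(\gamma_S-\gamma_E)+\beta_2(\gamma_S-\gamma_W)-\beta_{2'}(\gamma_E-\gamma_N)-\mu_1(\epsilon(\beta_1-\beta_{1'}+\mu_2)+\gamma_S-\gamma_W)-\mu_2(\epsilon(\beta_{2'}-\beta_2+\mu_1)+\gamma_E-\gamma_S)]$. The diagram volume is $\mathcal V(D,\chi,\mathfrak f)=\sum_c\mathcal V(c,\mathfrak f)\in\mathbb C/2\pi^2 i\mathbb Z$. Induced log-decoration: for component $j$, $\mathfrak s(\mathfrak m_j)=\mu_j$ and $\mathfrak s(\mathfrak l_j)=-w_j\mu_j+\sum_k\eta_k\beta_k$, where $w_j$ is the writhe of component $j$ (sum of signs of crossings both of whose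 strands lie in component $j$), the sum runs over segments $k$ of component $j$, and $\eta_k=1$ if segment $k$ is over-under (overstrand at its initial crossing, understrand at its terminal crossing), $\eta_k=-1$ if it is under-over, and $\eta_k=0$ otherwise. *)

From HB Require Import structures.
From mathcomp Require Import all_boot all_order all_algebra.
From mathcomp Require Import all_classical all_reals all_analysis.
From mathcomp Require Import complex.

Set Implicit Arguments.
Unset Strict Implicit.
Unset Printing Implicit Defensive.

Import Order.TTheory GRing.Theory Num.Theory.
Import numFieldNormedType.Exports.
Local Open Scope ring_scope.

(* At each crossing c the four segment ends are, after rotating so that     *)
(* both strands point to the right:                                         *)
(*   in1 c  = incoming upper-left segment   (label 1)                       *)
(*   in2 c  = incoming lower-left segment   (label 2)                       *)
(*   out1 c = outgoing lower-right segment  (label 1', continuation of 1)   *)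
(*   out2 c = outgoing upper-right segment  (label 2', continuation of 2)   *)
(* positive c = (sign of c == +1).  lreg k / rreg k are the regions to the  *)
(* left / right of segment k (w.r.t. its orientation); comp k is the        *)
(* component containing segment k.  Segments that are endpoints of no       *)
(* crossing are crossing-free closed components.                            *)

Record diagram := Diagram {
  crossing : finType;
  segment : finType;
  region : finType;
  component : finType;
  positive : crossing -> bool;
  in1 : crossing -> segment;
  in2 : crossing -> segment;
  out1 : crossing -> segment;
  out2 : crossing -> segment;
  comp : segment -> component;
  lreg : segment -> region;
  rreg : segment -> region }.

Section DiagramCombinatorics.
Variable D : diagram.

Definition inseg (x : crossing D * bool) : segment D :=
  if x.2 then in2 x.1 else in1 x.1.
Definition outseg (x : crossing D * bool) : segment D :=
  if x.2 then out2 x.1 else out1 x.1.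

Definition strand_next (k : segment D) : segment D :=
  if [pick x | inseg x == k] is Some x then outseg x else k.

Definition sreg (x : segment D * bool) : region D :=
  if x.2 then lreg x.1 else rreg x.1.
Definition flip (x : segment D * bool) : segment D * bool := (x.1, ~~ x.2).

(* boundary walk of a region (region kept on the left): the combinatorial
   map (rotation system) of the diagram, whose orbits are the faces.       *)
Definition fsucc (x : segment D * bool) : segment D * bool :=
  let: (k, l) := x in
  if l then
    if [pick c | in1 c == k] is Some c then (out2 c, true) else
    if [pick c | in2 c == k] is Some c then (in1 c, false) else x
  else
    if [pick c | out1 c == k] is Some c then (in2 c, false) else
    if [pick c | out2 c == k] is Some c then (out1 c, true) else x.

(* adjacency generating the connected components of the diagram (as a
   subset of the plane) *)
Definition gadj : rel (segment D * bool) :=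
  fun x y => [|| y == fsucc x, x == fsucc y | y == flip x].

(* incidence between diagram components and regions *)
Definition incid : rel (segment D * bool) :=
  fun x y => gadj x y || (sreg x == sreg y).

Definition is_link_diagram : Prop :=
  (* every segment has exactly one initial and one terminal crossing end,
     or none at all (crossing-free component) *)
  [/\ injective inseg, injective outseg &
      forall k, (exists x, inseg x = k) <-> (exists x, outseg x = k)] /\
  (forall k k', comp k = comp k' <-> fconnect strand_next k k') /\
  (forall j : component D, exists k, comp k = j) /\
  (* the four regions N, W, S, E around each crossing are well defined *)
  (forall x, sreg (fsucc x) = sreg x) /\
  (* distinct faces of a connected piece of the diagram are distinct regions *)
  (forall x y, connect gadj x y -> sreg x = sreg y -> fconnect fsucc x y) /\
  (* each connected piece of the diagram is planar (Euler characteristic 2) *)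
  (forall x,
     let V := #|[pred c | connect gadj x (in1 c, true)]| in
     let E := #|[pred k | connect gadj x (k, true)]| in
     let F := fcard fsucc [pred y | connect gadj x y] in
     (0 < V)%N -> (V + F = E + 2)%N) /\
  (* the regions are the components of the complement in the plane: the
     bipartite incidence graph pieces/regions is a tree *)
  ((forall r, exists x, sreg x = r) \/ #|segment D| = 0%N) /\
  (forall x y, connect incid x y) /\
  (#|region D| + n_comp gadj predT = fcard fsucc predT + 1)%N.

Definition regN (c : crossing D) := lreg (in1 c).
Definition regW (c : crossing D) := rreg (in1 c).
Definition regS (c : crossing D) := rreg (in2 c).
Definition regE (c : crossing D) := lreg (out1 c).

Definition writhe (j : component D) : int :=
  \sum_(c | (comp (in1 c) == j) && (comp (in2 c) == j))
     (if positive c then 1 else -1).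

(* strand 1 is the overstrand at a positive crossing, strand 2 at a
   negative one *)
Definition over_init (k : segment D) : bool :=
  [exists c, ((out1 c == k) && positive c) ||
             ((out2 c == k) && ~~ positive c)].
Definition under_init (k : segment D) : bool :=
  [exists c, ((out1 c == k) && ~~ positive c) ||
             ((out2 c == k) && positive c)].
Definition over_term (k : segment D) : bool :=
  [exists c, ((in1 c == k) && positive c) ||
             ((in2 c == k) && ~~ positive c)].
Definition under_term (k : segment D) : bool :=
  [exists c, ((in1 c == k) && ~~ positive c) ||
             ((in2 c == k) && positive c)].

Definition eta (k : segment D) : int :=
  if over_init k && under_term k then 1
  else if under_init k && over_term k then -1 else 0.

End DiagramCombinatorics.

Section ComplexFunctions.
Variable R : realType.
Local Notation C := R[i].

Definition cre (z : C) : R := let: Complex a _ := z in a.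
Definition cim (z : C) : R := let: Complex _ b := z in b.
Definition cabs (z : C) : R := Num.sqrt (cre z ^+ 2 + cim z ^+ 2).

Definition cexp (z : C) : C :=
  Complex (expR (cre z) * cos (cim z)) (expR (cre z) * sin (cim z)).

(* principal argument, in (-pi, pi] *)
Definition carg (z : C) : R :=
  if 0 <= cim z then acos (cre z / cabs z) else - acos (cre z / cabs z).

Definition cLog (z : C) : C := Complex (ln (cabs z)) (carg z).

Definition rC (x : R) : C := Complex x 0.
Definition iC : C := Complex 0 1.
Definition piC : C := rC pi.

Definition e2pi (x : C) : C := cexp (2%:R * piC * iC * x).

(* Li2(w) = - int_0^w log(1-t)/t dt along the segment [0,w]
          = - int_0^1 Log(1 - s w)/s ds  (principal Log) *)
Definition Li2 (w : C) : C :=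
  - Complex (\int[@lebesgue_measure R]_(s in `[0%R, 1%R]) (cre (cLog (1 - rC s * w)) / s))
            (\int[@lebesgue_measure R]_(s in `[0%R, 1%R]) (cim (cLog (1 - rC s * w)) / s)).

Definition Rdilog (w : C) : C := Li2 w + 2%:R^-1 * cLog w * cLog (1 - w).

(* lifted dilogarithm (representative in C of a class in C/2pi^2 Z) *)
Definition Ldilog (z0 z1 : C) : C :=
  let w := cexp z0 in
  let p0 := (z0 - cLog w) / (2%:R * piC * iC) in
  let p1 := (z1 + cLog (1 - w)) / (2%:R * piC * iC) in
  Rdilog w - piC ^+ 2 / 6%:R + piC * iC * (p0 * cLog (1 - w) + p1 * cLog w).

Definition congr_mod (m x y : C) : Prop := exists n : int, x - y = n%:~R * m.

End ComplexFunctions.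

Section Volume.
Variable R : realType.
Local Notation C := R[i].
Variable D : diagram.

(* A shaping chi_k = (a k, b k, m (comp k)); m is constant on components *)
Definition is_shaping (a b : segment D -> C) (m : component D -> C) : Prop :=
  (forall k, a k != 0 /\ b k != 0) /\ (forall j, m j != 0) /\
  forall c : crossing D,
    let a1 := a (in1 c) in let a2 := a (in2 c) in
    let a1' := a (out1 c) in let a2' := a (out2 c) in
    let b1 := b (in1 c) in let b2 := b (in2 c) in
    let b1' := b (out1 c) in let b2' := b (out2 c) in
    let m1 := m (comp (in1 c)) in let m2 := m (comp (in2 c)) in
    if positive c then
      let A := 1 - m1 * b1 / b2 * (1 - a1 / m1) * (1 - 1 / (m2 * a2)) in
      let Q := 1 - m2 * a2 * (1 - b2 / (m1 * b1)) in
      [/\ A != 0, Q != 0, a1' = a1 / A, a2' = a2 * A &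
          b1' = m2 * b2 / m1 * Q^-1 /\
          b2' = b1 * (1 - m1 / a1 * (1 - b2 / (m1 * b1)))]
    else
      let A := 1 - b2 / (m1 * b1) * (1 - m1 * a1) * (1 - m2 / a2) in
      let Q := 1 - 1 / (m1 * a1) * (1 - m1 * b1 / b2) in
      [/\ A != 0, Q != 0, a1' = a1 / A, a2' = a2 * A &
          b1' = m2 * b2 / m1 * (1 - a2 / m2 * (1 - m1 * b1 / b2)) /\
          b2' = b1 * Q^-1].

Definition pinched (b : segment D -> C) (c : crossing D) : bool :=
  b (out2 c) == b (in1 c).

Record flattening := Flattening {
  fmu : component D -> C;
  fbeta : segment D -> C;
  fgamma : region D -> C;
  fkappa : crossing D -> C }.

Definition is_flattening (a b : segment D -> C) (m : component D -> C)
    (f : flattening) : Prop :=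
  (forall j, e2pi (fmu f j) = m j) /\
  (forall k, e2pi (fbeta f k) = b k) /\
  (forall k, e2pi (fgamma f (rreg k) - fgamma f (lreg k)) = a k) /\
  (forall c, ~~ pinched b c ->
     let r := b (out2 c) / b (in1 c) in
     e2pi (fkappa f c) =
       e2pi (fgamma f (regN c)) / (1 - (if positive c then r else r^-1))).

Definition eps (c : crossing D) : C := if positive c then 1 else -1.

Definition crossing_volume (b : segment D -> C) (f : flattening)
    (c : crossing D) : C :=
  let e := eps c in
  let tpi := 2%:R * (piC R) * (iC R) in
  let be1 := fbeta f (in1 c) in let be2 := fbeta f (in2 c) in
  let be1' := fbeta f (out1 c) in let be2' := fbeta f (out2 c) in
  let mu1 := fmu f (comp (in1 c)) in let mu2 := fmu f (comp (in2 c)) in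
  let gN := fgamma f (regN c) in let gW := fgamma f (regW c) in
  let gS := fgamma f (regS c) in let gE := fgamma f (regE c) in
  let k := fkappa f c in
  if pinched b c then
    2%:R * (piC R) ^+ 2 * (iC R) *
      (be1 * (gW - gN) - be1' * (gS - gE) + be2 * (gS - gW) - be2' * (gE - gN)
       - mu1 * (e * (be1 - be1' + mu2) + gS - gW)
       - mu2 * (e * (be2' - be2 + mu1) + gE - gS))
  else
    - (iC R) * e *
      (Ldilog (tpi * e * (be2' - be1)) (tpi * (k - gN))
       - Ldilog (tpi * e * (be2 - be1 - mu1)) (tpi * (k - gW + e * mu1))
       + Ldilog (tpi * e * (be2 - be1' + mu2 - mu1)) (tpi * (k - gS + e * (mu1 - mu2)))
       - Ldilog (tpi * e * (be2' - be1' + mu2)) (tpi * (k - gE - e * mu2))).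

(* representative in C of the diagram volume in C / 2 pi^2 i Z *)
Definition diagram_volume (b : segment D -> C) (f : flattening) : C :=
  \sum_(c : crossing D) crossing_volume b f c.

Definition ld_mu (f : flattening) (j : component D) : C := fmu f j.
Definition ld_lambda (f : flattening) (j : component D) : C :=
  - (writhe j)%:~R * fmu f j + \sum_(k | comp k == j) (eta k)%:~R * fbeta f k.

End Volume.

From Pilot Require Import Defs.
From HB Require Import structures.
From mathcomp Require Import all_boot all_order all_algebra.
From mathcomp Require Import all_classical all_reals all_analysis.
From mathcomp Require Import complex.
From mathcomp Require Import ring lra.
Import Order.TTheory GRing.Theory Num.Theory.
Local Open Scope ring_scope.

Set Implicit Arguments.
Unset Strict Implicit.
Unset Printing Implicit Defensive.

(* Two flattenings of the same shaping differ by integers in [beta], [mu], in the jumps of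
   [gamma] across segments and, at non-pinched crossings, in [kappa - gamma_N].  At a
   non-pinched crossing each corner contributes a lifted dilogarithm [L(2 pi i X, 2 pi i Y)];
   since the shaping equations give [e^{2 pi i Y} (1 - e^{2 pi i X}) = 1], its branch numbers
   [p^0], [p^1] are integers, so shifting [(X, Y)] by integers changes [L] by
   [- 2 pi^2 (Y' X - X' Y)] modulo [2 pi^2 Z].  At a pinched crossing the volume is a
   quadratic form in the corner values and the same congruence is checked directly.  Summed
   over all crossings, the region terms of these cross products telescope along the strands,
   and what remains is [2 eta_k (beta'_k mu - mu' beta_k)] on each segment, which regroups by
   components into twice [lambda' mu - mu' lambda]. *)

Section ComplexExp.
Variable R : realType.
Local Notation C := R[i].

Definition Cint_pred : pred C := fun x => `[< exists n : int, x = n%:~R >].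
Definition Cint : qualifier 1 C := [qualify a x : C | Cint_pred x].

Lemma CintP (x : C) : reflect (exists n : int, x = n%:~R) (x \is a Cint).
Proof. exact: asboolP. Qed.

Fact Cint_subring_closed : subring_closed Cint.
Proof.
split=> [|_ _ /CintP[m ->] /CintP[n ->]|_ _ /CintP[m ->] /CintP[n ->]]; apply/CintP.
- by exists 1.
- by exists (m - n); rewrite intrB.
- by exists (m * n); rewrite intrM.
Qed.

HB.instance Definition _ := GRing.isSubringClosed.Build C Cint_pred Cint_subring_closed.

Lemma cos_sin_int2pi (n : int) :
  cos (n%:~R * (pi *+ 2) : R) = 1 /\ sin (n%:~R * (pi *+ 2) : R) = 0.
Proof.
have nat_case (k : nat) : cos (k%:R * (pi *+ 2) : R) = 1 /\ sin (k%:R * (pi *+ 2) : R) = 0.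
  rewrite mulr_natl -[_ *+ k]add0r.
  by rewrite (periodicn (@cosD2pi R)) (periodicn (@sinD2pi R)) cos0 sin0.
case: n => k; first exact: nat_case.
by rewrite NegzE mulrNz mulNr cosN sinN; have [-> ->] := nat_case k.+1; rewrite oppr0.
Qed.

Lemma cos_eq1_int2pi (x : R) : cos x = 1 -> exists n : int, x = n%:~R * (pi *+ 2).
Proof.
move=> cx1; have pi_gt0 := @pi_gt0 R.
have pi2_gt0 : 0 < (pi *+ 2 : R) by rewrite mulrn_wgt0.
set n := Num.floor (x / (pi *+ 2)); exists n.
have := floor_le (x / (pi *+ 2)); have := floorD1_gt (x / (pi *+ 2)).
rewrite -/n rmorphD /= ler_pdivlMr // ltr_pdivrMr // mulrDl mul1r => ub lb.
set r := x - n%:~R * (pi *+ 2).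
have [r_ge0 r_lt2pi] : 0 <= r /\ r < pi *+ 2 by rewrite /r; split; lra.
have cr1 : cos r = 1.
  by rewrite cosB cx1; have [-> ->] := cos_sin_int2pi n; rewrite mulr1 mulr0 addr0.
suff : r = 0 by move/eqP; rewrite subr_eq0 => /eqP.
(* [cos] is injective on [[0, pi]], and [r] or [2 pi - r] lies there *)
have cos_eq1_0 (y : R) : 0 <= y <= pi -> cos y = 1 -> y = 0.
  move=> /andP[y0 ypi] cy; apply: cos_inj; rewrite ?cy ?cos0 //.
    by rewrite in_itv /= y0 ypi.
  by rewrite in_itv /= lexx ltW.
have [rpi|pir] := leP r pi; first by apply: cos_eq1_0 => //; apply/andP; split; lra.
suff : pi *+ 2 - r = 0 by lra.
apply: cos_eq1_0; first by apply/andP; split; rewrite -?mulr2n; lra.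
by rewrite cosB cr1 cos2pi sin2pi mulr1 mul0r addr0.
Qed.

Lemma cexpD (x y : C) : cexp (x + y) = cexp x * cexp y.
Proof.
case: x => a b; case: y => c d; rewrite /cexp /= expRD cosD sinD.
by apply/eqP; rewrite eq_complex /=; apply/andP; split; apply/eqP; ring.
Qed.

Lemma cexp0 : cexp (0 : C) = 1.
Proof. by rewrite /cexp /= expR0 cos0 sin0 !mulr1 mulr0. Qed.

Lemma cexp_neq0 (x : C) : cexp x != 0.
Proof.
case: x => a b; rewrite /cexp eq_complex /= negb_and !mulf_eq0 !negb_or.
rewrite gt_eqF ?expR_gt0 //= -negb_and; apply/negP => /andP[/eqP c0 /eqP s0].
by have := cos2Dsin2 b; rewrite c0 s0 expr0n addr0 => /eqP; rewrite eq_sym oner_eq0.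
Qed.

Lemma cexpN (x : C) : cexp (- x) = (cexp x)^-1.
Proof.
by apply: (mulIf (cexp_neq0 x)); rewrite mulVf ?cexp_neq0 // -cexpD addNr cexp0.
Qed.

Lemma cabs_gt0 (w : C) : w != 0 -> 0 < cabs w.
Proof.
case: w => x y; rewrite eq_complex /= /cabs /= sqrtr_gt0 lt0r => xy0.
by rewrite paddr_eq0 ?sqr_ge0 // !sqrf_eq0 xy0 addr_ge0 ?sqr_ge0.
Qed.

Lemma cLogK (w : C) : w != 0 -> cexp (cLog w) = w.
Proof.
move=> w0; have := cabs_gt0 w0; case: w w0 => x y w0.
rewrite /cLog /cexp /carg /=; set r := cabs _ => r0.
have r2 : r ^+ 2 = x ^+ 2 + y ^+ 2 by rewrite sqr_sqrtr // addr_ge0 // sqr_ge0.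
have xr1 : -1 <= x / r <= 1.
  rewrite -ler_norml normrM normfV (gtr0_norm r0) ler_pdivrMr // mul1r.
  rewrite -(@ler_pXn2r _ 2) ?nnegrE ?normr_ge0 ?(ltW r0) //.
  by rewrite real_normK ?num_real // r2 lerDl sqr_ge0.
have sin_yr : Num.sqrt (1 - (x / r) ^+ 2) = `|y| / r.
  have -> : 1 - (x / r) ^+ 2 = (y / r) ^+ 2.
    by rewrite !expr_div_n r2; field; rewrite -r2 expf_neq0 // gt_eqF.
  by rewrite sqrtr_sqr normrM normfV (gtr0_norm r0).
rewrite lnK ?posrE //; apply/eqP; rewrite eq_complex /=; apply/andP; split; apply/eqP.
  by case: ifP => _; rewrite ?cosN acosK ?in_itv //= mulrC divfK ?gt_eqF.
case: ifP => y0; rewrite ?sinN sin_acos // sin_yr.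
  by rewrite ger0_norm // mulrC divfK ?gt_eqF.
by rewrite ltr0_norm ?ltNge ?y0 // mulrC mulNr divfK ?gt_eqF // opprK.
Qed.

Lemma intr_complex (n : int) : (n%:~R : C) = Complex n%:~R 0.
Proof. by rewrite -[Complex _ _]/(real_complex R n%:~R) rmorph_int. Qed.

Definition two_pi_i : C := 2%:R * piC R * iC R.

Lemma two_pi_iE : two_pi_i = Complex 0 (pi *+ 2).
Proof.
rewrite /two_pi_i /piC /rC /iC -[2%:R]/(2%:~R : C) intr_complex.
by apply/eqP; rewrite eq_complex /=; apply/andP; split; apply/eqP; ring.
Qed.

Lemma two_pi_i_neq0 : two_pi_i != 0.
Proof.
by rewrite two_pi_iE eq_complex /= negb_and orbC gt_eqF // mulrn_wgt0 // pi_gt0.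
Qed.

Lemma cexp_eq1 (z : C) : (cexp z = 1) <-> exists n : int, z = two_pi_i * n%:~R.
Proof.
split=> [|[n ->]]; last first.
  rewrite two_pi_iE intr_complex /cexp /= !mul0r !mulr0 subr0 add0r expR0 !mul1r.
  by rewrite mulrC; have [-> ->] := cos_sin_int2pi n.
case: z => a x /eqP; rewrite /cexp eq_complex /= => /andP[/eqP ec /eqP es].
have ea0 := expR_gt0 a.
have sx0 : sin x = 0 by move/eqP: es; rewrite mulf_eq0 gt_eqF //= => /eqP.
have cx1 : cos x = 1.
  have /eqP : cos x ^+ 2 = 1 by rewrite cos2sin2 sx0 expr0n subr0.
  rewrite sqrf_eq1 => /orP[/eqP //|/eqP cxN1].
  by move: ec; rewrite cxN1 mulrN1 => ec; lra.
have a0 : a = 0 by apply: expR_inj; rewrite expR0 -ec cx1 mulr1.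
have [n xn] := cos_eq1_int2pi cx1; exists n.
rewrite two_pi_iE intr_complex a0 xn.
by apply/eqP; rewrite eq_complex /=; apply/andP; split; apply/eqP; ring.
Qed.

Lemma e2piD (x y : C) : e2pi (x + y) = e2pi x * e2pi y.
Proof. by rewrite /e2pi mulrDr cexpD. Qed.

Lemma e2piN (x : C) : e2pi (- x) = (e2pi x)^-1.
Proof. by rewrite /e2pi mulrN cexpN. Qed.

Lemma e2piB (x y : C) : e2pi (x - y) = e2pi x / e2pi y.
Proof. by rewrite e2piD e2piN. Qed.

Lemma e2pi0 : e2pi (0 : C) = 1.
Proof. by rewrite /e2pi mulr0 cexp0. Qed.

Lemma e2pi_neq0 (x : C) : e2pi x != 0.
Proof. exact: cexp_neq0. Qed.

Lemma e2pi_eq1 (x : C) : (e2pi x = 1) <-> (x \is a Cint).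
Proof.
rewrite /e2pi cexp_eq1; split=> [[n /(mulfI two_pi_i_neq0) ->]|/CintP[n ->]].
  exact: rpred_int.
by exists n.
Qed.

Lemma e2pi_eq (x y : C) : (e2pi x = e2pi y) <-> (x - y \is a Cint).
Proof.
by rewrite -e2pi_eq1 e2piB; split=> [->|/divr1_eq //]; rewrite divff ?e2pi_neq0.
Qed.

End ComplexExp.

Arguments Cint {R}.

Ltac Cint_closed := repeat first
  [assumption | solve [auto] | rewrite rpredN | apply: rpredB | apply: rpredD | apply: rpredM].

Lemma congr_mod_Cint (R : realType) (m x y n : R[i]) :
  n \is a Cint -> x - y = n * m -> congr_mod m x y.
Proof. by move=> /CintP[k ->] e; exists k. Qed.

(** * The lifted dilogarithm *)

Section LiftedDilog.
Variable R : realType.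
Local Notation C := R[i].
Local Notation T := (two_pi_i R).

Definition Ldilog_p0 (z0 : C) : C := (z0 - cLog (cexp z0)) / T.
Definition Ldilog_p1 (z0 z1 : C) : C := (z1 + cLog (1 - cexp z0)) / T.

Definition wedge (A A' B B' : C) : C := A' * B - B' * A.

Lemma e2pi_div_two_pi_i (z : C) : e2pi (z / T) = cexp z.
Proof. by rewrite /e2pi -/T mulrC divfK ?two_pi_i_neq0. Qed.

Lemma Ldilog_p0_Cint (z0 : C) : Ldilog_p0 z0 \is a Cint.
Proof.
apply/e2pi_eq1; rewrite e2pi_div_two_pi_i cexpD cexpN cLogK ?cexp_neq0 //.
by rewrite divff ?cexp_neq0.
Qed.

Lemma Ldilog_p1_Cint (z0 z1 : C) : cexp z1 * (1 - cexp z0) = 1 -> Ldilog_p1 z0 z1 \is a Cint.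
Proof.
move=> z01; have w1 : 1 - cexp z0 != 0.
  by apply: contra_eq_neq z01 => ->; rewrite mulr0 eq_sym oner_neq0.
by apply/e2pi_eq1; rewrite e2pi_div_two_pi_i cexpD cLogK.
Qed.

Lemma Ldilog_diff (X Y X' Y' : C) : cexp (T * X') = cexp (T * X) ->
  Ldilog (T * X') (T * Y') = Ldilog (T * X) (T * Y) - 2%:R * piC R ^+ 2 *
    (wedge Y Y' X X' + ((X' - X) * Ldilog_p1 (T * X) (T * Y) - (Y' - Y) * Ldilog_p0 (T * X))).
Proof.
move=> eX; have i2 : iC R ^+ 2 = -1.
  by apply/eqP; rewrite eq_complex /=; apply/andP; split; apply/eqP; ring.
have -> : 2%:R * piC R ^+ 2 = - (piC R * iC R * T) by rewrite /two_pi_i; ring: i2.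
rewrite /Ldilog /Ldilog_p0 /Ldilog_p1 /wedge eX /two_pi_i /=; field.
by have := two_pi_i_neq0 R; rewrite /two_pi_i !mulf_eq0 !negb_or => /andP[/andP[_ ->] ->].
Qed.

Lemma Ldilog_diff_Cint (X Y X' Y' : C) :
  X' - X \is a Cint -> Y' - Y \is a Cint -> e2pi Y * (1 - e2pi X) = 1 ->
  exists2 n, n \is a Cint &
    Ldilog (T * X') (T * Y') = Ldilog (T * X) (T * Y) - 2%:R * piC R ^+ 2 * (wedge Y Y' X X' + n).
Proof.
move=> dX dY YX; have eX : cexp (T * X') = cexp (T * X) by apply/e2pi_eq.
rewrite (Ldilog_diff Y Y' eX); eexists; last reflexivity.
by apply: rpredB; apply: rpredM; rewrite // ?Ldilog_p0_Cint ?Ldilog_p1_Cint.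
Qed.

End LiftedDilog.

Lemma pick_inj (T : finType) (S : eqType) (F : T -> S) (t : T) :
  injective F -> [pick t' | F t' == F t] = Some t.
Proof. by move=> Finj; case: pickP => [t' /eqP/Finj -> // | /(_ t)]; rewrite eqxx. Qed.

Lemma existsb_inj (T : finType) (S : eqType) (F : T -> S) (P : pred T) (t : T) :
  injective F -> [exists t', (F t' == F t) && P t'] = P t.
Proof.
move=> Finj; apply/existsP/idP => [[t' /andP[/eqP/Finj -> //]] | Pt].
by exists t; rewrite eqxx.
Qed.

Lemma big_inj (V : nmodType) (T : finType) (S : eqType) (F : T -> S) (G : T -> V) (t : T) :
  injective F -> \sum_(t' | F t' == F t) G t' = G t.
Proof. by move=> Finj; apply: big_pred1 => t'; exact: inj_eq. Qed.

Section DiagramEnds.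
Variable D : diagram.
Hypothesis HD : is_link_diagram D.
Implicit Types (c : crossing D) (k : segment D) (x : crossing D * bool).

Lemma inseg_inj : injective (@inseg D).
Proof. by case: HD => [[]]. Qed.

Lemma outseg_inj : injective (@outseg D).
Proof. by case: HD => [[]]. Qed.

Lemma inseg_outseg k : (exists x, inseg x = k) <-> (exists x, outseg x = k).
Proof. by case: HD => [[]]. Qed.

Lemma comp_fconnect k k' : Defs.comp k = Defs.comp k' <-> fconnect (@strand_next D) k k'.
Proof. by case: HD => _ []. Qed.

Lemma sreg_fsucc (x : segment D * bool) : sreg (fsucc x) = sreg x.
Proof. by case: HD => _ [_ [_ []]]. Qed.

Lemma in1_inj : injective (@in1 D).
Proof. by move=> c c' /(@inseg_inj (c, false) (c', false)) [->]. Qed.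

Lemma in2_inj : injective (@in2 D).
Proof. by move=> c c' /(@inseg_inj (c, true) (c', true)) [->]. Qed.

Lemma out1_inj : injective (@out1 D).
Proof. by move=> c c' /(@outseg_inj (c, false) (c', false)) [->]. Qed.

Lemma out2_inj : injective (@out2 D).
Proof. by move=> c c' /(@outseg_inj (c, true) (c', true)) [->]. Qed.

Lemma pick_in1_in2 c : [pick c' | in1 c' == in2 c] = None.
Proof. by case: pickP => // c' /eqP/(@inseg_inj (c', false) (c, true))/(congr1 snd). Qed.

Lemma pick_out1_out2 c : [pick c' | out1 c' == out2 c] = None.
Proof. by case: pickP => // c' /eqP/(@outseg_inj (c', false) (c, true))/(congr1 snd). Qed.

Lemma lreg_out2 c : lreg (out2 c) = regN c.
Proof. by have := sreg_fsucc (in1 c, true); rewrite /fsucc pick_inj //; exact: in1_inj. Qed.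

Lemma lreg_in2 c : lreg (in2 c) = regW c.
Proof.
by have := sreg_fsucc (in2 c, true); rewrite /fsucc pick_in1_in2 pick_inj //; exact: in2_inj.
Qed.

Lemma rreg_out1 c : rreg (out1 c) = regS c.
Proof. by have := sreg_fsucc (out1 c, false); rewrite /fsucc pick_inj //; exact: out1_inj. Qed.

Lemma rreg_out2 c : rreg (out2 c) = regE c.
Proof.
have := sreg_fsucc (out2 c, false).
by rewrite /fsucc pick_out1_out2 pick_inj //; exact: out2_inj.
Qed.

Lemma strand_next_inseg x : strand_next (inseg x) = outseg x.
Proof. by rewrite /strand_next pick_inj //; exact: inseg_inj. Qed.

Lemma comp_outseg x : Defs.comp (outseg x) = Defs.comp (inseg x).
Proof. by apply/esym/comp_fconnect; rewrite -strand_next_inseg fconnect1. Qed.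

Lemma comp_out1 c : Defs.comp (out1 c) = Defs.comp (in1 c).
Proof. exact: (comp_outseg (c, false)). Qed.

Lemma comp_out2 c : Defs.comp (out2 c) = Defs.comp (in2 c).
Proof. exact: (comp_outseg (c, true)). Qed.

Lemma sum_inseg_outseg (V : nmodType) (G : segment D -> V) :
  \sum_x G (inseg x) = \sum_x G (outseg x).
Proof.
have same_image : @inseg D @: [set: crossing D * bool] = @outseg D @: [set: crossing D * bool].
  apply/setP => k; apply/imsetP/imsetP => [[x _ ->]|[x _ ->]].
    by have [y <-] := (inseg_outseg (inseg x)).1 (ex_intro _ x erefl); exists y.
  by have [y <-] := (inseg_outseg (outseg x)).2 (ex_intro _ x erefl); exists y.
have sum_image (F : crossing D * bool -> segment D) :
    injective F -> \sum_x G (F x) = \sum_(k in F @: [set: crossing D * bool]) G k.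
  move=> Finj; rewrite big_imset /=; last by move=> x y _ _ /Finj.
  by apply: eq_bigl => x; rewrite inE.
by rewrite (sum_image _ inseg_inj) (sum_image _ outseg_inj) same_image.
Qed.

Lemma sum_crossing_ends (V : nmodType) (F : crossing D * bool -> V) :
  \sum_x F x = \sum_c (F (c, false) + F (c, true)).
Proof.
transitivity (\sum_c \sum_(s : bool) F (c, s)).
  by rewrite pair_big; apply: eq_bigr => -[].
by apply: eq_bigr => c _; rewrite big_bool addrC.
Qed.

Lemma existsb_crossing_ends (P : pred (crossing D * bool)) :
  [exists x, P x] = [exists c, P (c, false) || P (c, true)].
Proof.
apply/existsP/existsP => [[[c []] Pc]|[c /orP[] Pc]]; last 2 first.
- by exists (c, false).
- by exists (c, true).
all: by exists c; rewrite Pc ?orbT.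
Qed.

Definition over x : bool := if x.2 then ~~ positive x.1 else positive x.1.
Definition over_sign x : int := if over x then 1 else -1.

Lemma over_initE k : over_init k = [exists x, (outseg x == k) && over x].
Proof. by rewrite (existsb_crossing_ends (fun x => (outseg x == k) && over x)). Qed.

Lemma under_initE k : under_init k = [exists x, (outseg x == k) && ~~ over x].
Proof.
rewrite (existsb_crossing_ends (fun x => (outseg x == k) && ~~ over x)).
by apply: eq_existsb => c; rewrite /over /= negbK.
Qed.

Lemma over_termE k : over_term k = [exists x, (inseg x == k) && over x].
Proof. by rewrite (existsb_crossing_ends (fun x => (inseg x == k) && over x)). Qed.

Lemma under_termE k : under_term k = [exists x, (inseg x == k) && ~~ over x].
Proof.
rewrite (existsb_crossing_ends (fun x => (inseg x == k) && ~~ over x)).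
by apply: eq_existsb => c; rewrite /over /= negbK.
Qed.

Lemma eta_over_sign k :
  2 * Defs.eta k = \sum_(x | outseg x == k) over_sign x - \sum_(x | inseg x == k) over_sign x.
Proof.
rewrite /Defs.eta over_initE under_initE over_termE under_termE.
have [x0 /eqP <- | no_out] := pickP (fun x => outseg x == k).
  have [y0 in_y0] := (inseg_outseg (outseg x0)).2 (ex_intro _ x0 erefl).
  rewrite !(existsb_inj _ _ outseg_inj) (big_inj _ _ outseg_inj) -in_y0.
  rewrite !(existsb_inj _ _ inseg_inj) (big_inj _ _ inseg_inj).
  by rewrite /over_sign; case: (over x0); case: (over y0).
have no_in x : inseg x != k.
  apply/eqP => in_x; have [y out_y] := (inseg_outseg k).1 (ex_intro _ x in_x).
  by move: (no_out y); rewrite out_y eqxx.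
have none (F : crossing D * bool -> segment D) (P : pred (crossing D * bool)) :
    (forall x, F x != k) -> [exists x, (F x == k) && P x] = false.
  by move=> Fk; apply/existsP => -[x /andP[/eqP Fx _]]; move/eqP: (Fk x).
by rewrite !none ?big_pred0 // => x; rewrite ?no_out ?(negbTE (no_in x)).
Qed.

End DiagramEnds.

(** * Corners of a crossing *)

Variant corner := cornerN | cornerW | cornerS | cornerE.

Section Corners.
Variables (R : realType) (D : diagram).
Local Notation C := R[i].
Local Notation eps := (@eps R D).
Implicit Types (g : flattening R D) (c : crossing D) (k : segment D).

Definition corner_sum (F : corner -> C) : C := F cornerN - F cornerW + F cornerS - F cornerE.

(* the paper's [zeta^0_r] and [zeta^1_r] at the corner [r] of [c], divided by [2 pi i] *)
Definition zeta0 g c r : C := eps c *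
  match r with
  | cornerN => fbeta g (out2 c) - fbeta g (in1 c)
  | cornerW => fbeta g (in2 c) - fbeta g (in1 c) - fmu g (Defs.comp (in1 c))
  | cornerS => fbeta g (in2 c) - fbeta g (out1 c) + fmu g (Defs.comp (in2 c))
               - fmu g (Defs.comp (in1 c))
  | cornerE => fbeta g (out2 c) - fbeta g (out1 c) + fmu g (Defs.comp (in2 c))
  end.

Definition zeta1 g c r : C :=
  match r with
  | cornerN => fkappa g c - fgamma g (regN c)
  | cornerW => fkappa g c - fgamma g (regW c) + eps c * fmu g (Defs.comp (in1 c))
  | cornerS => fkappa g c - fgamma g (regS c)
               + eps c * (fmu g (Defs.comp (in1 c)) - fmu g (Defs.comp (in2 c)))
  | cornerE => fkappa g c - fgamma g (regE c) - eps c * fmu g (Defs.comp (in2 c))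
  end.

Lemma eps_Cint c : eps c \is a Cint.
Proof. by rewrite /Defs.eps; case: positive; rewrite ?rpredN rpred1. Qed.

Lemma crossing_volume_nonpinched b g c : ~~ pinched b c ->
  crossing_volume b g c = - iC R * eps c *
    corner_sum (fun r => Ldilog (two_pi_i R * zeta0 g c r) (two_pi_i R * zeta1 g c r)).
Proof.
by move=> hp; rewrite /crossing_volume (negbTE hp) /corner_sum /zeta0 /zeta1 /two_pi_i /= !mulrA.
Qed.

Lemma crossing_volume_pinched b g c : pinched b c ->
  crossing_volume b g c = - (2%:R * piC R ^+ 2 * iC R) * eps c *
    corner_sum (fun r => zeta0 g c r * zeta1 g c r).
Proof.
move=> hp; rewrite /crossing_volume hp /corner_sum /zeta0 /zeta1 /Defs.eps /=.
by case: positive; ring.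
Qed.

Lemma zeta0E g c :
  zeta0 g c cornerE = zeta0 g c cornerN - zeta0 g c cornerW + zeta0 g c cornerS.
Proof. by rewrite /zeta0; ring. Qed.

Definition gamma_jump g k : C := fgamma g (rreg k) - fgamma g (lreg k).

Definition fdiff g g' : flattening R D :=
  Flattening (fun j => fmu g' j - fmu g j) (fun k => fbeta g' k - fbeta g k)
    (fun x => fgamma g' x - fgamma g x) (fun c => fkappa g' c - fkappa g c).

Lemma zeta0_fdiff g g' c r : zeta0 g' c r - zeta0 g c r = zeta0 (fdiff g g') c r.
Proof. by case: r; rewrite /zeta0 /=; ring. Qed.

Lemma zeta1_fdiff g g' c r : zeta1 g' c r - zeta1 g c r = zeta1 (fdiff g g') c r.
Proof. by case: r; rewrite /zeta1 /=; ring. Qed.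

Lemma gamma_jump_fdiff g g' k : gamma_jump g' k - gamma_jump g k = gamma_jump (fdiff g g') k.
Proof. by rewrite /gamma_jump /=; ring. Qed.

Lemma zeta0_Cint g c r : (forall k, fbeta g k \is a Cint) -> (forall j, fmu g j \is a Cint) ->
  zeta0 g c r \is a Cint.
Proof. by move=> Zb Zm; have := eps_Cint c; case: r => Ze; rewrite /zeta0; Cint_closed. Qed.

Hypothesis HD : is_link_diagram D.

Lemma zeta1_subN g c :
  [/\ zeta1 g c cornerW - zeta1 g c cornerN =
        eps c * fmu g (Defs.comp (in1 c)) - gamma_jump g (in1 c),
      zeta1 g c cornerS - zeta1 g c cornerN =
        eps c * (fmu g (Defs.comp (in1 c)) - fmu g (Defs.comp (in2 c)))
        - gamma_jump g (in2 c) - gamma_jump g (in1 c) &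
      zeta1 g c cornerE - zeta1 g c cornerN =
        - (eps c * fmu g (Defs.comp (in2 c))) - gamma_jump g (out2 c)].
Proof.
rewrite /zeta1 /gamma_jump (lreg_in2 HD) (rreg_out2 HD) (lreg_out2 HD).
by rewrite /regN /regW /regS /regE; split; ring.
Qed.

Lemma zeta1_subN_Cint g c r : (forall k, gamma_jump g k \is a Cint) ->
  (forall j, fmu g j \is a Cint) -> zeta1 g c r - zeta1 g c cornerN \is a Cint.
Proof.
move=> Zg Zm; have := eps_Cint c; have [zW zS zE] := zeta1_subN g c.
by case: r; rewrite ?subrr ?rpred0 // ?zW ?zS ?zE => Ze; Cint_closed.
Qed.

End Corners.

Arguments eps_Cint {R D}.

Section ShapingAlgebra.
Variable F : fieldType.
Variables (a1 a2 b1 b2 m1 m2 b1' b2' A Q : F).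
Hypotheses (a1_neq0 : a1 != 0) (a2_neq0 : a2 != 0) (b1_neq0 : b1 != 0) (b2_neq0 : b2 != 0)
  (m1_neq0 : m1 != 0) (m2_neq0 : m2 != 0) (A_neq0 : A != 0) (Q_neq0 : Q != 0).

Lemma shape_corners_pos :
  A = 1 - m1 * b1 / b2 * (1 - a1 / m1) * (1 - 1 / (m2 * a2)) ->
  Q = 1 - m2 * a2 * (1 - b2 / (m1 * b1)) ->
  b1' = m2 * b2 / m1 * Q^-1 ->
  b2' = b1 * (1 - m1 / a1 * (1 - b2 / (m1 * b1))) ->
  1 - b2' / b1 != 0 ->
  [/\ (1 - b2' / b1)^-1 * (m1 / a1) * (1 - b2 / b1 / m1) = 1,
      (1 - b2' / b1)^-1 * (m1 / m2 / a2 / a1) * (1 - b2 / b1' * m2 / m1) = 1 &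
      (1 - b2' / b1)^-1 * (m2^-1 / (a2 * A)) * (1 - b2' / b1' * m2) = 1].
Proof.
move=> eA eQ e1 e2 den_neq0.
(* the denominators produced by [field] below *)
have u_neq0 : a1 * b1 - (a1 * b1 - (m1 * b1 - b2)) != 0.
  rewrite opprB addrC subrK; move: den_neq0; rewrite e2; apply: contra => /eqP u0.
  have -> : b2 = m1 * b1 by apply/eqP; rewrite eq_sym -subr_eq0 u0.
  by apply/eqP; field; rewrite a1_neq0 b1_neq0 m1_neq0.
have Q'_neq0 : m1 * b1 - m2 * a2 * (m1 * b1 - b2) != 0.
  by rewrite (_ : _ - _ = m1 * b1 * Q) ?mulf_neq0 // eQ; field; rewrite m1_neq0 b1_neq0.
have A'_neq0 : b2 * (m2 * a2) - b1 * (m1 - a1) * (m2 * a2 - 1) != 0.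
  rewrite (_ : _ - _ = b2 * (m2 * a2) * A) ?mulf_neq0 // eA.
  by field; rewrite m1_neq0 b2_neq0 m2_neq0 a2_neq0.
by split; rewrite ?e1 e2 ?eQ ?eA; field; rewrite ?a1_neq0 ?a2_neq0 ?b1_neq0 ?b2_neq0
  ?m1_neq0 ?m2_neq0 ?A_neq0 ?Q_neq0 ?u_neq0 ?Q'_neq0 ?A'_neq0.
Qed.

Lemma shape_corners_neg :
  b1' != 0 ->
  A = 1 - b2 / (m1 * b1) * (1 - m1 * a1) * (1 - m2 / a2) ->
  Q = 1 - 1 / (m1 * a1) * (1 - m1 * b1 / b2) ->
  b1' = m2 * b2 / m1 * (1 - a2 / m2 * (1 - m1 * b1 / b2)) ->
  b2' = b1 * Q^-1 ->
  1 - (b2' / b1)^-1 != 0 ->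
  [/\ (1 - (b2' / b1)^-1)^-1 * (m1^-1 / a1) * (1 - (b2 / b1 / m1)^-1) = 1,
      (1 - (b2' / b1)^-1)^-1 * ((m1 / m2)^-1 / a2 / a1) * (1 - (b2 / b1' * m2 / m1)^-1) = 1 &
      (1 - (b2' / b1)^-1)^-1 * ((m2^-1)^-1 / (a2 * A)) * (1 - (b2' / b1' * m2)^-1) = 1].
Proof.
move=> b1'_neq0 eA eQ e1 e2 den_neq0.
have u_neq0 : b2 - m1 * b1 != 0.
  move: den_neq0; rewrite e2 eQ; apply: contra => /eqP u0.
  have -> : b2 = m1 * b1 by apply/eqP; rewrite -subr_eq0 u0.
  by apply/eqP; field; rewrite a1_neq0 b1_neq0 m1_neq0.
have u'_neq0 : m1 * a1 * b2 - (m1 * a1 * b2 - (b2 - m1 * b1)) != 0.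
  by rewrite opprB addrC subrK.
have Q'_neq0 : m1 * a1 * b2 - (b2 - m1 * b1) != 0.
  rewrite (_ : _ - _ = m1 * a1 * b2 * Q) ?mulf_neq0 // eQ.
  by field; rewrite m1_neq0 a1_neq0 b2_neq0.
have A'_neq0 : m1 * b1 * a2 - b2 * (1 - m1 * a1) * (a2 - m2) != 0.
  rewrite (_ : _ - _ = m1 * b1 * a2 * A) ?mulf_neq0 // eA.
  by field; rewrite m1_neq0 b1_neq0 a2_neq0.
have B'_neq0 : m2 * b2 - a2 * (b2 - m1 * b1) != 0.
  by rewrite (_ : _ - _ = b1' * m1) ?mulf_neq0 // e1; field; rewrite m1_neq0 m2_neq0 b2_neq0.
by split; rewrite ?e1 e2 eQ ?eA; field;
  rewrite ?a1_neq0 ?a2_neq0 ?b1_neq0 ?b2_neq0 ?m1_neq0 ?m2_neq0 ?A_neq0 ?Q_neq0 ?u_neq0 ?u'_neq0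
    ?Q'_neq0 ?A'_neq0 ?B'_neq0 ?oner_neq0.
Qed.

Lemma pinched_shape_pos : b1 = b1 * (1 - m1 / a1 * (1 - b2 / (m1 * b1))) ->
  b1' = m2 * b2 / m1 * (1 - m2 * a2 * (1 - b2 / (m1 * b1)))^-1 ->
  b2 = m1 * b1 /\ m2 * b2 = m1 * b1'.
Proof.
move=> pinch e1.
have u0 : (m1 * b1 - b2) / a1 = 0.
  have -> : (m1 * b1 - b2) / a1 = b1 - b1 * (1 - m1 / a1 * (1 - b2 / (m1 * b1))).
    by field; rewrite m1_neq0 b1_neq0 a1_neq0.
  by rewrite -pinch subrr.
have b2E : b2 = m1 * b1.
  by move/eqP: u0; rewrite mulf_eq0 invr_eq0 (negbTE a1_neq0) orbF subr_eq0 => /eqP.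
by split => //; rewrite e1 b2E; field; rewrite m1_neq0 b1_neq0 oner_neq0.
Qed.

Lemma pinched_shape_neg : b1 = b1 * (1 - 1 / (m1 * a1) * (1 - m1 * b1 / b2))^-1 ->
  b1' = m2 * b2 / m1 * (1 - a2 / m2 * (1 - m1 * b1 / b2)) ->
  b2 = m1 * b1 /\ m2 * b2 = m1 * b1'.
Proof.
move=> pinch e1.
have Q1 : (1 - 1 / (m1 * a1) * (1 - m1 * b1 / b2))^-1 = 1.
  by apply: (mulfI b1_neq0); rewrite -pinch mulr1.
have u0 : (b2 - m1 * b1) / (m1 * a1 * b2) = 0.
  have -> : (b2 - m1 * b1) / (m1 * a1 * b2) = 1 - (1 - 1 / (m1 * a1) * (1 - m1 * b1 / b2)).
    by field; rewrite m1_neq0 a1_neq0 b2_neq0.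
  by rewrite -[X in 1 - X]invrK Q1 invr1 subrr.
have b2E : b2 = m1 * b1.
  move/eqP: u0; rewrite mulf_eq0 invr_eq0 !mulf_eq0 (negbTE m1_neq0) (negbTE a1_neq0).
  by rewrite (negbTE b2_neq0) !orbF subr_eq0 => /eqP.
by split => //; rewrite e1 b2E; field; rewrite m1_neq0 b1_neq0 m2_neq0.
Qed.

End ShapingAlgebra.

Section Shaped.
Variables (R : realType) (D : diagram).
Local Notation C := R[i].
Local Notation eps := (@eps R D).
Variables (a b : segment D -> C) (m : component D -> C).
Hypothesis Hchi : is_shaping a b m.
Implicit Types (c : crossing D) (k : segment D).

Definition epow c (z : C) : C := if positive c then z else z^-1.

Lemma e2pi_eps c (x : C) : e2pi (eps c * x) = epow c (e2pi x).
Proof. by rewrite /Defs.eps /epow; case: positive; rewrite ?mul1r ?mulN1r ?e2piN. Qed.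

Definition kappa_den c : C := 1 - epow c (b (out2 c) / b (in1 c)).

Lemma kappa_den_neq0 c : ~~ pinched b c -> kappa_den c != 0.
Proof.
move=> hp; rewrite /kappa_den subr_eq0 eq_sym /epow.
by case: positive; rewrite ?invr_eq1; apply: contra hp => /eqP/divr1_eq; rewrite /pinched => ->.
Qed.

(* [epow c (corner_ratio c r)] and [corner_v c r] are the values of the paper's [w = e^{zeta^0_r}]
   and [e^{zeta^1_r}], read off the shaping; see [e2pi_zeta0] and [e2pi_zeta1] *)
Definition corner_ratio c r : C :=
  let m1 := m (Defs.comp (in1 c)) in let m2 := m (Defs.comp (in2 c)) in
  match r with
  | cornerN => b (out2 c) / b (in1 c)
  | cornerW => b (in2 c) / b (in1 c) / m1
  | cornerS => b (in2 c) / b (out1 c) * m2 / m1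
  | cornerE => b (out2 c) / b (out1 c) * m2
  end.

Definition corner_v c r : C :=
  let m1 := m (Defs.comp (in1 c)) in let m2 := m (Defs.comp (in2 c)) in
  (kappa_den c)^-1 *
  match r with
  | cornerN => 1
  | cornerW => epow c m1 / a (in1 c)
  | cornerS => epow c (m1 / m2) / a (in2 c) / a (in1 c)
  | cornerE => (epow c m2)^-1 / a (out2 c)
  end.

Lemma corner_shape c r : ~~ pinched b c -> corner_v c r * (1 - epow c (corner_ratio c r)) = 1.
Proof.
move=> hp; have den_neq0 := kappa_den_neq0 hp.
suff [cW cS cE] : [/\ corner_v c cornerW * (1 - epow c (corner_ratio c cornerW)) = 1,
    corner_v c cornerS * (1 - epow c (corner_ratio c cornerS)) = 1 &
    corner_v c cornerE * (1 - epow c (corner_ratio c cornerE)) = 1].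
  by case: r => //; rewrite /corner_v /= mulr1 mulVf.
have [ab_neq0 [m_neq0 /(_ c)]] := Hchi.
have [a1 b1] := ab_neq0 (in1 c); have [a2 b2] := ab_neq0 (in2 c).
have b1' := (ab_neq0 (out1 c)).2.
have m1 := m_neq0 (Defs.comp (in1 c)); have m2 := m_neq0 (Defs.comp (in2 c)).
move: den_neq0; rewrite /corner_v /corner_ratio /kappa_den /epow /=.
case: positive => /= [den [A Q _ -> [e1 e2]] | den [A Q _ -> [e1 e2]]].
  exact: (shape_corners_pos a1 a2 b1 b2 m1 m2 A Q erefl erefl e1 e2 den).
exact: (shape_corners_neg a1 a2 b1 b2 m1 m2 A Q b1' erefl erefl e1 e2 den).
Qed.

Lemma pinched_corner_ratio c r : pinched b c -> corner_ratio c r = 1.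
Proof.
move=> /eqP b2'E; have [ab_neq0 [m_neq0 /(_ c) shape_c]] := Hchi.
have [a1 b1] := ab_neq0 (in1 c); have b2 := (ab_neq0 (in2 c)).2.
have m1 := m_neq0 (Defs.comp (in1 c)); have m2 := m_neq0 (Defs.comp (in2 c)).
have [b2E b1'E] : b (in2 c) = m (Defs.comp (in1 c)) * b (in1 c) /\
    m (Defs.comp (in2 c)) * b (in2 c) = m (Defs.comp (in1 c)) * b (out1 c).
  move: shape_c; case: positive => /= -[_ _ _ _ [e1 e2]].
    by apply: (pinched_shape_pos a1 b1 m1 _ e1); rewrite -{1}b2'E e2.
  by apply: (pinched_shape_neg a1 b1 b2 m1 m2 _ e1); rewrite -{1}b2'E e2.
have {}b1'E : b (out1 c) = m (Defs.comp (in2 c)) * b (in2 c) / m (Defs.comp (in1 c)).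
  by rewrite b1'E mulrC mulKf.
rewrite /corner_ratio b2'E; case: r => /=; rewrite ?b1'E ?b2E; field; rewrite ?m1 ?m2 ?b1 //.
Qed.

End Shaped.

(** * Comparing two flattenings *)

Section Flattenings.
Variables (R : realType) (D : diagram).
Hypothesis HD : is_link_diagram D.
Local Notation C := R[i].
Local Notation eps := (@eps R D).
Variables (a b : segment D -> C) (m : component D -> C).
Hypothesis Hchi : is_shaping a b m.
Implicit Types (g : flattening R D) (c : crossing D) (k : segment D).

Section OneFlattening.
Variable g : flattening R D.
Hypothesis Hg : is_flattening a b m g.

Lemma e2pi_gamma_jump k : e2pi (gamma_jump g k) = a k.
Proof. by have [_ [_ [e_gamma _]]] := Hg; exact: e_gamma. Qed.

Lemma e2pi_zeta0 c r : e2pi (zeta0 g c r) = epow c (corner_ratio b m c r).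
Proof.
have [e_mu [e_beta _]] := Hg.
by case: r; rewrite /zeta0 /corner_ratio !(e2piB, e2piD, e2pi_eps) !e_beta ?e_mu.
Qed.

Lemma e2pi_zeta1 c r : ~~ pinched b c -> e2pi (zeta1 g c r) = corner_v a b m c r.
Proof.
move=> hp; have [e_mu [_ [_ /(_ c hp) e_kappa]]] := Hg.
rewrite -(subrK (zeta1 g c cornerN) (zeta1 g c r)) e2piD mulrC.
have -> : e2pi (zeta1 g c cornerN) = (kappa_den b c)^-1.
  by rewrite /zeta1 e2piB e_kappa mulrAC divff ?e2pi_neq0 ?mul1r.
have [zW zS zE] := zeta1_subN HD g c.
case: r; rewrite ?subrr ?zW ?zS ?zE /corner_v /= ?e2pi0 //.
all: by rewrite !(e2pi_gamma_jump, e2piB, e2piD, e2pi_eps, e2piN) ?e_mu.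
Qed.

Lemma zeta_Ldilog_condition c r :
  ~~ pinched b c -> e2pi (zeta1 g c r) * (1 - e2pi (zeta0 g c r)) = 1.
Proof. by move=> hp; rewrite e2pi_zeta1 // e2pi_zeta0 corner_shape. Qed.

Lemma pinched_zeta0_Cint c r : pinched b c -> zeta0 g c r \is a Cint.
Proof.
move=> hp; apply/e2pi_eq1.
by rewrite e2pi_zeta0 (pinched_corner_ratio Hchi) // /epow; case: positive; rewrite ?invr1.
Qed.

End OneFlattening.

Variables f f' : flattening R D.
Hypotheses (Hf : is_flattening a b m f) (Hf' : is_flattening a b m f').
Local Notation d := (fdiff f f').

Lemma fdiff_beta_Cint k : fbeta d k \is a Cint.
Proof. by apply/e2pi_eq; have [_ [-> _]] := Hf; have [_ [-> _]] := Hf'. Qed.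

Lemma fdiff_mu_Cint j : fmu d j \is a Cint.
Proof. by apply/e2pi_eq; have [-> _] := Hf; have [-> _] := Hf'. Qed.

Lemma fdiff_gamma_jump_Cint k : gamma_jump d k \is a Cint.
Proof. by rewrite -gamma_jump_fdiff; apply/e2pi_eq; rewrite !e2pi_gamma_jump. Qed.

Lemma zeta0_diff_Cint c r : zeta0 f' c r - zeta0 f c r \is a Cint.
Proof.
by rewrite zeta0_fdiff; apply: zeta0_Cint; [exact: fdiff_beta_Cint | exact: fdiff_mu_Cint].
Qed.

Lemma zeta1_diff_subN_Cint c r : zeta1 d c r - zeta1 d c cornerN \is a Cint.
Proof.
by apply: zeta1_subN_Cint => //; [exact: fdiff_gamma_jump_Cint | exact: fdiff_mu_Cint].
Qed.

Lemma zeta1_diff_Cint c r : ~~ pinched b c -> zeta1 f' c r - zeta1 f c r \is a Cint.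
Proof.
move=> hp; rewrite zeta1_fdiff -(subrK (zeta1 d c cornerN) (zeta1 d c r)).
apply: rpredD; first exact: zeta1_diff_subN_Cint.
by rewrite -zeta1_fdiff; apply/e2pi_eq; rewrite !e2pi_zeta1.
Qed.

Definition crossing_wedge c : C :=
  eps c * corner_sum (fun r => wedge (zeta1 f c r) (zeta1 f' c r) (zeta0 f c r) (zeta0 f' c r)).

Local Notation twopi2i := (2%:R * piC R ^+ 2 * iC R).

Lemma nonpinched_volume_diff c : ~~ pinched b c -> exists2 n, n \is a Cint &
  crossing_volume b f' c - crossing_volume b f c = twopi2i * (crossing_wedge c + n).
Proof.
move=> hp.
have dL r :=
  Ldilog_diff_Cint (zeta0_diff_Cint c r) (zeta1_diff_Cint r hp) (zeta_Ldilog_condition Hf r hp).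
have [nN ZN eN] := dL cornerN; have [nW ZW eW] := dL cornerW.
have [nS ZS eS] := dL cornerS; have [nE ZE eE] := dL cornerE.
exists (eps c * (nN - nW + nS - nE)).
  by have Ze : eps c \is a Cint := eps_Cint c; Cint_closed.
rewrite !crossing_volume_nonpinched // /corner_sum eN eW eS eE /crossing_wedge /corner_sum.
ring.
Qed.

Lemma pinched_volume_diff c : pinched b c -> exists2 n, n \is a Cint &
  crossing_volume b f' c - crossing_volume b f c = twopi2i * (crossing_wedge c + n).
Proof.
move=> hp.
have Zx r : zeta0 f c r + zeta0 f' c r \is a Cint.
  by apply: rpredD; apply: pinched_zeta0_Cint.
have Zy r := zeta1_diff_subN_Cint c r.
(* [kappa] is unconstrained at a pinched crossing: only the differences of [zeta1] between
   corners are integers, which suffices since the [zeta0] sum to zero around [c] *)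
exists (- eps c *
  corner_sum (fun r => (zeta0 f c r + zeta0 f' c r) * (zeta1 d c r - zeta1 d c cornerN))).
  by have Ze : eps c \is a Cint := eps_Cint c; rewrite /corner_sum; Cint_closed.
rewrite !crossing_volume_pinched // /crossing_wedge /corner_sum /wedge -!zeta1_fdiff.
by rewrite !(zeta0E f) !(zeta0E f'); ring.
Qed.

Lemma diagram_volume_diff : exists2 n, n \is a Cint &
  diagram_volume b f' - diagram_volume b f = twopi2i * (\sum_c crossing_wedge c + n).
Proof.
rewrite /diagram_volume -sumrB.
apply: (big_rec2 (fun x y => exists2 n, n \is a Cint & x = twopi2i * (y + n))).
  by exists 0; rewrite ?rpred0 // addr0 mulr0.
move=> c _ y _ [n Zn ->].
have [n' Zn' ->] : exists2 n', n' \is a Cint &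
    crossing_volume b f' c - crossing_volume b f c = twopi2i * (crossing_wedge c + n').
  by case: (boolP (pinched b c)); [exact: pinched_volume_diff | exact: nonpinched_volume_diff].
by exists (n' + n); [exact: rpredD | ring].
Qed.

Definition strand_wedge k : C :=
  wedge (fbeta f k) (fbeta f' k) (fmu f (Defs.comp k)) (fmu f' (Defs.comp k)).

Definition segment_wedge k : C :=
  wedge (fbeta f k) (fbeta f' k) (fgamma f (lreg k) - fgamma f (rreg k))
    (fgamma f' (lreg k) - fgamma f' (rreg k))
  + wedge (fgamma f (rreg k)) (fgamma f' (rreg k)) (fmu f (Defs.comp k)) (fmu f' (Defs.comp k)).

(* the [segment_wedge] terms telescope along the strands in [sum_crossing_wedge] *)
Definition end_wedge x : C :=
  segment_wedge (outseg x) - segment_wedge (inseg x)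
  + (over_sign x)%:~R * (strand_wedge (outseg x) - strand_wedge (inseg x)).

Lemma crossing_wedge_ends c : crossing_wedge c = end_wedge (c, false) + end_wedge (c, true).
Proof.
rewrite /crossing_wedge /corner_sum /zeta0 /zeta1 /end_wedge /segment_wedge /strand_wedge /wedge.
rewrite /over_sign /over /outseg /inseg /Defs.eps /=.
rewrite (lreg_in2 HD) (rreg_out1 HD) (lreg_out2 HD) (rreg_out2 HD) (comp_out1 HD) (comp_out2 HD).
by rewrite /regN /regW /regS /regE; case: positive => /=; ring.
Qed.

Lemma sum_crossing_wedge :
  \sum_c crossing_wedge c = \sum_k (2 * Defs.eta k)%:~R * strand_wedge k.
Proof.
rewrite (eq_bigr _ (fun c _ => crossing_wedge_ends c)) -sum_crossing_ends big_split /=.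
rewrite sumrB (sum_inseg_outseg HD segment_wedge) subrr add0r.
have fibers (F : crossing D * bool -> segment D) :
    \sum_x (over_sign x)%:~R * strand_wedge (F x)
    = \sum_k (\sum_(x | F x == k) over_sign x)%:~R * strand_wedge k.
  rewrite (partition_big F xpredT) //=; apply: eq_bigr => k _.
  by rewrite rmorph_sum mulr_suml; apply: eq_bigr => x /eqP ->.
under eq_bigr do rewrite mulrBr.
rewrite sumrB !fibers -sumrB; apply: eq_bigr => k _.
by rewrite (eta_over_sign HD) rmorphB mulrBl.
Qed.

Lemma sum_ld_wedge : \sum_j wedge (ld_lambda f j) (ld_lambda f' j) (ld_mu f j) (ld_mu f' j)
  = \sum_k (Defs.eta k)%:~R * strand_wedge k.
Proof.
rewrite [RHS](partition_big (@Defs.comp D) xpredT) //=.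
apply: eq_bigr => j _; rewrite /wedge /ld_lambda /ld_mu.
transitivity (\sum_(k | Defs.comp k == j) (Defs.eta k)%:~R * fbeta f' k * fmu f j
   - fmu f' j * \sum_(k | Defs.comp k == j) (Defs.eta k)%:~R * fbeta f k).
  by rewrite -mulr_suml; ring.
rewrite mulr_sumr -sumrB; apply: eq_bigr => k /eqP <-.
by rewrite /strand_wedge /wedge; ring.
Qed.

Lemma ld_lambda_diff_Cint j : ld_lambda f' j - ld_lambda f j \is a Cint.
Proof.
rewrite /ld_lambda opprD addrACA -mulrBr -sumrB.
apply: rpredD; first by apply: rpredM; [rewrite rpredN rpred_int | exact: fdiff_mu_Cint].
by apply: rpred_sum => k _; rewrite -mulrBr rpredM ?rpred_int //; exact: fdiff_beta_Cint.
Qed.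

Lemma diagram_volume_congr :
  congr_mod twopi2i (diagram_volume b f' - diagram_volume b f) (4%:R * piC R ^+ 2 * iC R *
    \sum_j wedge (ld_lambda f j) (ld_lambda f' j) (ld_mu f j) (ld_mu f' j)).
Proof.
have [n Zn ->] := diagram_volume_diff; apply: (congr_mod_Cint Zn).
rewrite sum_ld_wedge sum_crossing_wedge; under eq_bigr do rewrite intrM -mulrA.
by rewrite -mulr_sumr; ring.
Qed.

End Flattenings.

Theorem theorem3p2 (R : realType) (D : diagram) (HD : is_link_diagram D)
  (a b : segment D -> R[i]) (m : component D -> R[i])
  (Hchi : is_shaping a b m)
  (f f' : flattening R D)
  (Hf : is_flattening a b m f) (Hf' : is_flattening a b m f') :
  let dmu j := ld_mu f' j - ld_mu f j in
  let dlam j := ld_lambda f' j - ld_lambda f j in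
  let twopi2i := 2%:R * piC R ^+ 2 * iC R in
  (forall j, exists n : int, dmu j = n%:~R) /\
  (forall j, exists n : int, dlam j = n%:~R) /\
  congr_mod twopi2i (diagram_volume b f' - diagram_volume b f)
    (4%:R * piC R ^+ 2 * iC R *
       \sum_(j : component D) (dlam j * ld_mu f j - dmu j * ld_lambda f j)) /\
  ((forall j, ld_mu f' j = ld_mu f j /\ ld_lambda f' j = ld_lambda f j) ->
     congr_mod twopi2i (diagram_volume b f') (diagram_volume b f)).
Proof.
move=> dmu dlam twopi2i.
have -> : \sum_j (dlam j * ld_mu f j - dmu j * ld_lambda f j)
    = \sum_j wedge (ld_lambda f j) (ld_lambda f' j) (ld_mu f j) (ld_mu f' j).
  by apply: eq_bigr => j _; rewrite /dlam /dmu /wedge; ring.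
have volume := diagram_volume_congr HD Hchi Hf Hf'.
split; first by move=> j; apply/CintP; exact: (fdiff_mu_Cint Hf Hf').
split; first by move=> j; apply/CintP; exact: (ld_lambda_diff_Cint Hf Hf').
split=> // same; have [n e] := volume; exists n; rewrite -e.
by rewrite big1 ?mulr0 ?subr0 // => j _; rewrite /wedge !(same j).1 (same j).2 mulrC subrr.
Qed.
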